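(* Let $\Lambda=(\mathcal{L}\subset\mathbb{R}^s,\mathbb{R}^n)$ be a generic cut-and-project scheme with associated matrix $L$ and with self-similarity $A\in\mathbb{R}^{n\times n}$, and let $B\in\mathbb{R}^{(s-n)\times(s-n)}$, $C\in\mathbb{Z}^{s\times s}$ satisfy $\begin{pmatrix}A&O\\O&B\end{pmatrix}L=LC$. Then $\mu_{A,\mathbb{Q}}=\mu_{B,\mathbb{Q}}=\mu_{C,\mathbb{Q}}=\mu_C$. In particular, either $A,B,C$ are all non-singular or all singular. Moreover, $A,B,C$ are either all diagonalizable over $\mathbb{C}$ or all non-diagonalizable over $\mathbb{C}$.
   Context: For a square matrix $T$, $\mu_T$ is its minimal polynomial (monic polynomial in $\mathbb{C}[X]$ of smallest degree with $\mu_T(T)=O$), and, when the eigenvalues of $T$ are algebraic, $\mu_{T,\mathbb{Q}}$ is the monic polynomial in $\mathbb{Q}[X]$ of smallest degree with $\mu_{T,\mathbb{Q}}(T)=O$. A lattice $\mathcal{L}\subset\mathbb{R}^s$ is $\{L\mathbf{r}:\mathbf{r}\in\mathbb{Z}^s\}$ for a non-singular $L\in\mathbb{R}^{s\times s}$. For $1\le n<s$, the scheme $(\mathcal{L}\subset\mathbb{R}^s,\mathbb{R}^n)$ has projections $\pi_\parallel(\mathbf{x})=(x_1,\dots,x_n)^\top$, $\pi_\perp(\mathbf{x})=(x_{n+1},\dots,x_s)^\top$; it is generic if $\pi_\parallel|_{\mathcal{L}}$ and $\pi_\perp|_{\mathcal{L}}$ are injective and $\pi_\perp(\mathcal{L})$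 is dense in $\mathbb{R}^{s-n}$. $A$ is a self-similarity of it if $A\pi_\parallel(\mathcal{L})\subset\pi_\parallel(\mathcal{L})$ and there exist $C\in\mathbb{Z}^{s\times s}$, $B$ real with $\begin{pmatrix}A&O\\O&B\end{pmatrix}L=LC$. *)

From HB Require Import structures.
From mathcomp Require Import all_boot all_order all_algebra.
From mathcomp Require Import reals.
From mathcomp.real_closed Require Import complex.
Set Implicit Arguments. Unset Strict Implicit. Unset Printing Implicit Defensive.
Import Order.TTheory GRing.Theory Num.Theory.
Local Open Scope ring_scope.

(* Conventions: the ambient space is R^s with s = n + m, m = s - n;
   vectors are column vectors 'cV[R]_(n + m).  pi_par = usubmx (first n
   coordinates), pi_perp = dsubmx (last m coordinates). *)

Definition intmx (R : realType) (k l : nat) (M : 'M[int]_(k, l)) : 'M[R]_(k, l) :=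
  map_mx (fun z : int => z%:~R) M.

Definition in_lattice (R : realType) (s : nat) (L : 'M[R]_s) (x : 'cV[R]_s) : Prop :=
  exists r : 'cV[int]_s, x = L *m intmx R r.

Definition is_lattice_matrix (R : realType) (s : nat) (L : 'M[R]_s) : Prop :=
  L \in unitmx.

Definition generic_cps (R : realType) (n m : nat) (L : 'M[R]_(n + m)) : Prop :=
  [/\ ((1 <= n)%N /\ (1 <= m)%N), is_lattice_matrix L,
   (forall x y, in_lattice L x -> in_lattice L y -> (usubmx x : 'cV[R]_n) = usubmx y -> x = y),
   (forall x y, in_lattice L x -> in_lattice L y -> (dsubmx x : 'cV[R]_m) = dsubmx y -> x = y) &
   (forall (y : 'cV[R]_m) (eps : R), 0 < eps ->
      exists x, in_lattice L x /\ forall i, `|(dsubmx x : 'cV[R]_m) i 0 - y i 0| < eps)].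

Definition self_similarity (R : realType) (n m : nat) (L : 'M[R]_(n + m)) (A : 'M[R]_n) : Prop :=
  (forall x, in_lattice L x -> exists y, in_lattice L y /\
       A *m (usubmx x : 'cV[R]_n) = usubmx y) /\
  exists (C : 'M[int]_(n + m)) (B : 'M[R]_m),
    block_mx A 0 0 B *m L = L *m intmx R C.

Definition mx_evalQ (R : realType) (k : nat) (T : 'M[R]_k) (p : {poly rat}) : 'M[R]_k :=
  \sum_(i < size p) (ratr p`_i : R) *: (T ^+ i).

Definition minpoly_Q (R : realType) (k : nat) (T : 'M[R]_k) (p : {poly rat}) : Prop :=
  [/\ p \is monic, mx_evalQ T p = 0 &
      forall q : {poly rat}, q \is monic -> mx_evalQ T q = 0 -> (size p <= size q)%N].

Definition cmx (R : realType) (k : nat) (M : 'M[R]_k) : 'M[complex R]_k :=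
  map_mx (fun x : R => (x%:C)%C) M.

(* p is mu_T: the monic polynomial in F[X] of smallest degree with p(T) = O.
   (mathcomp's mxminpoly only applies to 'M_k.+1; this is the paper's definition.) *)
Definition mx_eval (F : fieldType) (k : nat) (T : 'M[F]_k) (p : {poly F}) : 'M[F]_k :=
  \sum_(i < size p) p`_i *: (T ^+ i).

Definition is_minpoly (F : fieldType) (k : nat) (T : 'M[F]_k) (p : {poly F}) : Prop :=
  [/\ p \is monic, mx_eval T p = 0 &
      forall q : {poly F}, q \is monic -> mx_eval T q = 0 -> (size p <= size q)%N].

(* For rational q, clear denominators so that q(C) is an integer matrix; then
   diag(q(A), q(B)) L = L q(C).  If q(A) = 0, every lattice point L q(C) r has
   vanishing parallel projection, hence is 0 by injectivity of pi_par on the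
   lattice, so q(C) = 0; symmetrically for B, and q(C) = 0 forces
   q(A) = q(B) = 0 because L is invertible.  Hence A, B and C have the same
   annihilator in Q[X], generated by the minimal polynomial p of the rational
   matrix C, and singularity and diagonalizability are read off p.  A matrix
   T annihilated exactly by the multiples of p is singular iff p(0) = 0.  It
   is diagonalizable over C iff p is square-free: if p = b u^2 and the complex
   minimal polynomial of T is square-free, then it also divides b u, so b u
   kills T, contradicting the minimality of p. *)

From HB Require Import structures.
From mathcomp Require Import all_boot all_order all_algebra all_field.
From mathcomp Require Import reals.
From mathcomp.real_closed Require Import complex.
From mathcomp.real_closed Require polyorder.
Import Order.TTheory GRing.Theory Num.Theory.
Set Implicit Arguments. Unset Strict Implicit. Unset Printing Implicit Defensive.
Local Open Scope ring_scope.

Lemma separable_square_freeP (R : realDomainType) (p : {poly R}) :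
  reflect (forall u : {poly R}, size u != 1 -> ~~ (u ^+ 2 %| p)) (separable_poly p).
Proof.
apply: (iffP idP) => [sep_p u u_neq1 | sqf_p]; first by rewrite separable_nosquare.
apply/separable_polyP; split=> [|u _ u_gt1]; first exact/poly_square_freeP.
by rewrite -size_poly_eq0 polyorder.size_deriv -subn1 subn_eq0 -ltnNge.
Qed.

Lemma separable_dvdp_sqr (F : closedFieldType) (mu f g : {poly F}) :
  separable_poly mu -> mu %| f * g ^+ 2 -> mu %| f * g.
Proof.
move=> sep_mu; have [rs def_mu] := closed_field_poly_normal mu.
have lc_mu : lead_coef mu != 0 by rewrite lead_coef_eq0 separable_poly_neq0.
rewrite def_mu !dvdpZl // => rs_fg2; apply: uniq_roots_dvdp; last first.
  by rewrite uniq_rootsE -separable_prod_XsubC -(eqp_separable (eqp_scale _ lc_mu)) -def_mu.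
apply/allP => r r_rs; have : root (f * g ^+ 2) r.
  by rewrite -dvdp_XsubCl (dvdp_trans _ rs_fg2) // dvdp_XsubCl root_prod_XsubC.
by rewrite !rootM orbb.
Qed.

Lemma diagonalizable_separable (F : closedFieldType) n (T : 'M[F]_n.+1) :
  diagonalizable T <-> separable_poly (mxminpoly T).
Proof.
split=> [/diagonalizableP [rs uniq_rs mu_rs] | sep_mu].
  by apply: dvdp_separable mu_rs _; rewrite separable_prod_XsubC.
have [rs def_mu] := closed_field_poly_normal (mxminpoly T).
rewrite (monicP (mxminpoly_monic T)) scale1r in def_mu.
apply/diagonalizableP; exists rs; last by rewrite def_mu.
by rewrite -separable_prod_XsubC -def_mu.
Qed.

Lemma unitmx_eigenvalue0 (F : fieldType) n (T : 'M[F]_n) :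
  (T \in unitmx) = ~~ eigenvalue T 0.
Proof. by rewrite /eigenvalue /eigenspace raddf0 subr0 kermx_eq0 row_free_unit negbK. Qed.

Lemma horner_mx_intertwine (R : comNzRingType) n k (X : 'M[R]_n.+1) (Y : 'M[R]_k.+1)
    (V : 'M[R]_(n.+1, k.+1)) q :
  X *m V = V *m Y -> horner_mx X q *m V = V *m horner_mx Y q.
Proof.
move=> XV_VY; elim/poly_ind: q => [|q c IHq]; first by rewrite !rmorph0 mul0mx mulmx0.
rewrite !rmorphD !rmorphM /= !horner_mx_X !horner_mx_C mulmxDl mulmxDr -!mulmxE.
by rewrite -mulmxA XV_VY !mulmxA IHq mul_scalar_mx mul_mx_scalar.
Qed.

Lemma usubmx_block_diag_mul (R : pzRingType) n m l (X : 'M[R]_n) (Y : 'M[R]_m)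
    (W : 'M[R]_(n + m, l)) :
  usubmx (block_mx X 0 0 Y *m W) = X *m usubmx W.
Proof. by rewrite -{1}[W]vsubmxK mul_block_col col_mxKu mul0mx addr0. Qed.

Lemma dsubmx_block_diag_mul (R : pzRingType) n m l (X : 'M[R]_n) (Y : 'M[R]_m)
    (W : 'M[R]_(n + m, l)) :
  dsubmx (block_mx X 0 0 Y *m W) = Y *m dsubmx W.
Proof. by rewrite -{1}[W]vsubmxK mul_block_col col_mxKd mul0mx add0r. Qed.

Definition rat_mxminpoly (F : numFieldType) n (T : 'M[F]_n.+1) (p : {poly rat}) :=
  p \is monic /\ forall q, (p %| q) = (horner_mx T (map_poly ratr q) == 0).

Lemma rat_mxminpoly_mxminpoly n (T : 'M[rat]_n.+1) : rat_mxminpoly T (mxminpoly T).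
Proof.
split=> [|q]; first exact: mxminpoly_monic.
by rewrite dvd_mxminpoly -(eq_map_poly (fmorph_eq_rat idfun)) map_poly_id.
Qed.

Section RatMinPoly.
Variables (F : numFieldType) (n : nat) (T : 'M[F]_n.+1) (p : {poly rat}).
Hypothesis pT : rat_mxminpoly T p.

Lemma rat_mxminpoly_map (K : numFieldType) (f : {rmorphism F -> K}) :
  rat_mxminpoly (map_mx f T) p.
Proof.
have [p_monic dvd_p] := pT; split=> // q.
rewrite dvd_p -(map_mx_eq0 f) map_horner_mx -map_poly_comp.
by congr (horner_mx _ _ == 0); apply: eq_map_poly => a /=; rewrite fmorph_rat.
Qed.

Lemma root_rat_mxminpoly a : root p a = eigenvalue T (ratr a).
Proof.
have [p_monic dvd_p] := pT; apply/idP/idP => [pa0 | ].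
  set q := p %/ ('X - a%:P).
  have def_p : p = q * ('X - a%:P) by rewrite divpK // dvdp_XsubCl.
  have qT_eigen : horner_mx T (map_poly ratr q) *m T = ratr a *: horner_mx T (map_poly ratr q).
    apply/eqP; rewrite -mul_mx_scalar -subr_eq0 -mulmxBr.
    have := dvdpp p; rewrite {2}def_p dvd_p rmorphM /= rmorphB /= map_polyX map_polyC.
    by rewrite rmorphM rmorphB /= horner_mx_X horner_mx_C.
  have qT_neq0 : horner_mx T (map_poly ratr q) != 0.
    have q0 : q != 0 by apply: contra_neq (monic_neq0 p_monic) => q0; rewrite def_p q0 mul0r.
    rewrite -dvd_p; apply/negP => /(dvdp_leq q0).
    by rewrite {1}def_p size_mul ?polyXsubC_eq0 // size_XsubC addn2 ltnn.
  apply: contra qT_neq0 => /eqP eig0.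
  by rewrite -submx0 -eig0; apply/eigenspaceP.
rewrite eigenvalue_root_min => mu_a.
have mu_p : mxminpoly T %| map_poly ratr p by rewrite dvd_mxminpoly -dvd_p.
by rewrite -(@fmorph_root _ _ (@ratr F)) -dvdp_XsubCl (dvdp_trans _ mu_p) // dvdp_XsubCl.
Qed.

Lemma unitmx_rat_mxminpoly : (T \in unitmx) = ~~ root p 0.
Proof. by rewrite root_rat_mxminpoly rmorph0 unitmx_eigenvalue0. Qed.

End RatMinPoly.

Lemma diagonalizable_rat_mxminpoly (F : numClosedFieldType) n (T : 'M[F]_n.+1) p :
  rat_mxminpoly T p -> diagonalizable T <-> separable_poly p.
Proof.
move=> [p_monic dvd_p]; rewrite diagonalizable_separable.
have mu_p q : (mxminpoly T %| map_poly ratr q) = (p %| q) by rewrite dvd_mxminpoly dvd_p.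
split=> [sep_mu | sep_p]; last first.
  by apply: (@dvdp_separable _ (map_poly ratr p)); rewrite ?mu_p ?separable_map.
apply/separable_square_freeP => u u_neq1; apply/negP => u2_p.
set b := p %/ u ^+ 2; have def_p : p = b * u ^+ 2 by rewrite divpK.
have bu0 : b * u != 0.
  by apply: contra_neq (monic_neq0 p_monic) => bu0; rewrite def_p expr2 mulrA bu0 mul0r.
have u_gt1 : (1 < size u)%N.
  by rewrite ltn_neqAle eq_sym u_neq1 size_poly_gt0; apply: contra_neq bu0 => ->; rewrite mulr0.
have /(dvdp_leq bu0) : p %| b * u.
  rewrite -mu_p rmorphM; apply: separable_dvdp_sqr sep_mu _.
  by rewrite -rmorphXn -rmorphM -def_p mu_p.
rewrite {1}def_p expr2 mulrA size_mul //; last by apply: contra_neq bu0 => ->; rewrite mulr0.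
by case: (size u) u_gt1 => [|[|s]] // _; rewrite addnS /= -{2}[size _]addn0 leq_add2l.
Qed.

Lemma map_poly_ratr_int (F : numFieldType) (z : {poly int}) :
  map_poly ratr (map_poly intr z) = map_poly intr z :> {poly F}.
Proof. by rewrite -map_poly_comp; apply: eq_map_poly => c /=; rewrite ratr_int. Qed.

Lemma rat_mxminpoly_int_ann (F K : numFieldType) n k (S : 'M[F]_n.+1) (T : 'M[K]_k.+1) p :
  (forall z : {poly int},
     (horner_mx S (map_poly intr z) == 0) = (horner_mx T (map_poly intr z) == 0)) ->
  rat_mxminpoly T p -> rat_mxminpoly S p.
Proof.
move=> ST [p_monic dvd_p]; split=> // q.
have [z [a a_neq0 ->]] := rat_poly_scale q.
have a'_neq0 : a%:~R^-1 != 0 :> rat by rewrite invr_eq0 intr_eq0.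
rewrite dvdpZr // dvd_p !map_polyZ !linearZ /= !scaler_eq0 !fmorph_eq0 (negPf a'_neq0) /=.
by rewrite !map_poly_ratr_int ST.
Qed.

Lemma mx_evalE (F : fieldType) n (T : 'M[F]_n.+1) q : mx_eval T q = horner_mx T q.
Proof.
rewrite -[in RHS](coefK q) poly_def rmorph_sum /=; apply: eq_bigr => i _.
by rewrite linearZ /= rmorphXn /= horner_mx_X.
Qed.

Lemma mx_evalQE (R : realType) n (T : 'M[R]_n.+1) q :
  mx_evalQ T q = horner_mx T (map_poly ratr q).
Proof.
rewrite -mx_evalE /mx_evalQ /mx_eval size_map_poly.
by apply: eq_bigr => i _; rewrite coef_map.
Qed.

Lemma is_minpoly_mxminpoly (F : fieldType) n (T : 'M[F]_n.+1) : is_minpoly T (mxminpoly T).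
Proof.
split=> [|| q q_monic]; rewrite ?mx_evalE ?mxminpoly_monic ?mx_root_minpoly //.
by move/mxminpoly_min; apply: dvdp_leq; apply: monic_neq0.
Qed.

Lemma minpoly_Q_rat_mxminpoly (R : realType) n (T : 'M[R]_n.+1) p :
  rat_mxminpoly T p -> minpoly_Q T p.
Proof.
move=> [p_monic dvd_p]; split=> // [|q q_monic]; rewrite mx_evalQE.
  by apply/eqP; rewrite -dvd_p.
by move/eqP; rewrite -dvd_p; apply: dvdp_leq; apply: monic_neq0.
Qed.

Section IntegerMatrices.
Variable R : realType.

Lemma intmx_eq0 k l (Z : 'M[int]_(k, l)) : (intmx R Z == 0) = (Z == 0).
Proof.
apply/eqP/eqP => [/matrixP intZ0 | ->]; apply/matrixP => i j; rewrite !mxE //.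
by have /eqP := intZ0 i j; rewrite !mxE intr_eq0 => /eqP.
Qed.

Lemma intmx_mul k l r (M : 'M[int]_(k, l)) (N : 'M[int]_(l, r)) :
  intmx R (M *m N) = intmx R M *m intmx R N.
Proof. exact: map_mxM. Qed.

Lemma intmx_horner k (C : 'M[int]_k.+1) (z : {poly int}) :
  intmx R (horner_mx C z) = horner_mx (intmx R C) (map_poly intr z).
Proof. exact: map_horner_mx. Qed.

End IntegerMatrices.

Section LatticeIntertwiner.
Variables (R : realType) (n m : nat) (L : 'M[R]_(n + m)).
Hypothesis L_unit : L \in unitmx.

Lemma lattice_proj_eq0 k (pi : {linear 'cV[R]_(n + m) -> 'cV[R]_k}) (Z : 'M[int]_(n + m)) :
  (forall x y, in_lattice L x -> in_lattice L y -> pi x = pi y -> x = y) ->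
  (forall r, pi (L *m intmx R Z *m intmx R r) = 0) -> Z = 0.
Proof.
move=> pi_inj pi_LZ; apply/matrixP => i j; rewrite mxE.
pose e : 'cV[int]_(n + m) := delta_mx j 0.
have : L *m intmx R (Z *m e) = 0.
  apply: pi_inj; [by exists (Z *m e) | by exists 0; rewrite /intmx map_mx0 mulmx0 | ].
  by rewrite linear0 intmx_mul mulmxA pi_LZ.
move/(congr1 (mulmx (invmx L))); rewrite mulKmx // mulmx0 => /eqP.
by rewrite intmx_eq0 -colE => /eqP/matrixP/(_ i 0); rewrite !mxE.
Qed.

Variables (X : 'M[R]_n) (Y : 'M[R]_m) (Z : 'M[int]_(n + m)).
Hypothesis XYL_LZ : block_mx X 0 0 Y *m L = L *m intmx R Z.

Lemma block_diag_eq0_intertwined : Z = 0 -> X = 0 /\ Y = 0.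
Proof.
move=> Z0; move: XYL_LZ; rewrite Z0 /intmx map_mx0 mulmx0.
move/(congr1 (mulmx^~ (invmx L))); rewrite mulmxK // mul0mx -(block_mx0 _ n m n m).
by case/eq_block_mx.
Qed.

Lemma upper_eq0_intertwined :
    (forall x y, in_lattice L x -> in_lattice L y -> usubmx x = usubmx y -> x = y) ->
  (X == 0) = (Z == 0).
Proof.
move=> usub_inj; apply/eqP/eqP => [X0 | /block_diag_eq0_intertwined[] //].
apply: (lattice_proj_eq0 usub_inj) => r.
by rewrite /= -XYL_LZ -mulmxA usubmx_block_diag_mul X0 mul0mx.
Qed.

Lemma lower_eq0_intertwined :
    (forall x y, in_lattice L x -> in_lattice L y -> dsubmx x = dsubmx y -> x = y) ->
  (Y == 0) = (Z == 0).
Proof.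
move=> dsub_inj; apply/eqP/eqP => [Y0 | /block_diag_eq0_intertwined[] //].
apply: (lattice_proj_eq0 dsub_inj) => r.
by rewrite /= -XYL_LZ -mulmxA dsubmx_block_diag_mul Y0 mul0mx.
Qed.

End LatticeIntertwiner.

Section CutAndProject.
Variables (R : realType) (n m : nat) (L : 'M[R]_(n.+1 + m.+1)).
Variables (A : 'M[R]_n.+1) (B : 'M[R]_m.+1) (C : 'M[int]_(n.+1 + m.+1)).
Hypotheses (cps : generic_cps L) (ABL_LC : block_mx A 0 0 B *m L = L *m intmx R C).

Lemma horner_block_intertwined (z : {poly int}) :
  block_mx (horner_mx A (map_poly intr z)) 0 0 (horner_mx B (map_poly intr z)) *m L
  = L *m intmx R (horner_mx C z).
Proof.
have AU : A *m usubmx L = usubmx L *m intmx R C.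
  by rewrite mul_usub_mx -ABL_LC usubmx_block_diag_mul.
have BD : B *m dsubmx L = dsubmx L *m intmx R C.
  by rewrite mul_dsub_mx -ABL_LC dsubmx_block_diag_mul.
rewrite -[in LHS](vsubmxK L) mul_block_col !mul0mx addr0 add0r.
rewrite intmx_horner -[in RHS](vsubmxK L) mul_col_mx.
by rewrite -(horner_mx_intertwine _ AU) -(horner_mx_intertwine _ BD).
Qed.

Lemma rat_mxminpoly_upper p : rat_mxminpoly (intmx R C) p -> rat_mxminpoly A p.
Proof.
have [_ L_unit usub_inj _ _] := cps; apply: rat_mxminpoly_int_ann => z.
by rewrite (upper_eq0_intertwined L_unit (horner_block_intertwined z)) // -intmx_horner intmx_eq0.
Qed.

Lemma rat_mxminpoly_lower p : rat_mxminpoly (intmx R C) p -> rat_mxminpoly B p.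
Proof.
have [_ L_unit _ dsub_inj _] := cps; apply: rat_mxminpoly_int_ann => z.
by rewrite (lower_eq0_intertwined L_unit (horner_block_intertwined z)) // -intmx_horner intmx_eq0.
Qed.

End CutAndProject.

Theorem proposition4 (R : realType) (n m : nat) (L : 'M[R]_(n + m))
    (A : 'M[R]_n) (B : 'M[R]_m) (C : 'M[int]_(n + m)) :
  generic_cps L -> self_similarity L A ->
  block_mx A 0 0 B *m L = L *m intmx R C ->
  (exists p : {poly rat},
     [/\ minpoly_Q A p, minpoly_Q B p, minpoly_Q (intmx R C) p &
         is_minpoly (cmx (intmx R C)) (map_poly (fun q : rat => ratr q : complex R) p)])
  /\ ((A \in unitmx) = (B \in unitmx) /\ (B \in unitmx) = (intmx R C \in unitmx))
  /\ ((diagonalizable (cmx A) <-> diagonalizable (cmx B))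
      /\ (diagonalizable (cmx B) <-> diagonalizable (cmx (intmx R C)))).
Proof.
move=> cps _; have [[n_gt0 m_gt0] _ _ _ _] := cps.
case: n n_gt0 L A C cps => // n _ L A C.
case: m m_gt0 L B C => // m _ L B C cps ABL_LC.
pose CQ : 'M[rat]_(n.+1 + m.+1) := map_mx intr C.
have C_CQ (F : numFieldType) : map_mx intr C = map_mx ratr CQ :> 'M[F]_(n.+1 + m.+1).
  by apply/matrixP => i j; rewrite !mxE ratr_int.
have pC : rat_mxminpoly (intmx R C) (mxminpoly CQ).
  by rewrite /intmx C_CQ; apply: rat_mxminpoly_map; apply: rat_mxminpoly_mxminpoly.
have pA := rat_mxminpoly_upper cps ABL_LC pC.
have pB := rat_mxminpoly_lower cps ABL_LC pC.
have cmx_diag (k : nat) (T : 'M[R]_k.+1) :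
    rat_mxminpoly T (mxminpoly CQ) -> diagonalizable (cmx T) <-> separable_poly (mxminpoly CQ).
  by move=> pT; apply: diagonalizable_rat_mxminpoly; apply: (rat_mxminpoly_map pT (real_complex R)).
split; [exists (mxminpoly CQ); split | split; split].
- exact: minpoly_Q_rat_mxminpoly.
- exact: minpoly_Q_rat_mxminpoly.
- exact: minpoly_Q_rat_mxminpoly.
- have -> : cmx (intmx R C) = map_mx intr C by apply/matrixP => i j; rewrite !mxE rmorph_int.
  by rewrite C_CQ -mxminpoly_map; apply: is_minpoly_mxminpoly.
- by rewrite (unitmx_rat_mxminpoly pA) (unitmx_rat_mxminpoly pB).
- by rewrite (unitmx_rat_mxminpoly pB) (unitmx_rat_mxminpoly pC).
- by rewrite (cmx_diag _ _ pA) (cmx_diag _ _ pB).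
- by rewrite (cmx_diag _ _ pB) (cmx_diag _ _ pC).
Qed.
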